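(* Let $G$ be a connected graph on $[n+1]$ such that $NC_G$ is graded. Then the max-min edge labeling is an $S_n$ EL-labeling of $NC_G$ if and only if $G$ is perfectly labeled.
   Context: Graphs are finite simple graphs with vertex set $[n+1]$; edges are written $ij$ with $i<j$. $G$ is perfectly labeled if whenever $ik,jk\in E(G)$ with $i<j<k$, also $ij\in E(G)$. A bond of $G$ is a spanning subgraph (identified with its edge set) each of whose connected components is an induced subgraph of $G$; it is noncrossing if there are no two distinct components with vertex sets $B,B'$ and $a,c\in B$, $b,d\in B'$, $a<b<c<d$. $NC_G$ is the poset of noncrossing bonds ordered by inclusion of edge sets. When $G$ is connected and $NC_G$ is graded, each cover $H\lessdot H'$ merges exactly two components (blocks) $B,B'$ of $H$ into one; the max-min edge labeling assigns to it the label $\max\{\min B,\min B'\}-1$. An EL-labeling: every interval has a unique maximal chain with strictly increasing labels, and it lexicographically precedes every other maximal chain of the interval. An $S_n$ EL-labeling is an EL-labeling of a poset of rank $n$ in which the labels along every maximal chain form a permutation of $[n]$ (with the natural order on $[n]$). *)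

(* Vertices [n+1] = {1,...,n+1} are represented 0-indexed by 'I_n.+1
   (vertex k+1 of the paper is the ordinal k). *)
From mathcomp Require Import all_boot.
Set Implicit Arguments. Unset Strict Implicit. Unset Printing Implicit Defensive.

(* A graph G on 'I_n.+1 is a boolean relation (simple: symmetric, irreflexive).
   Subgraphs/bonds are identified with edge sets: sets of pairs (i,j) with i < j. *)
Notation edgeset n := {set 'I_n.+1 * 'I_n.+1}.

Definition Eset n (G : rel 'I_n.+1) : edgeset n :=
  [set p : 'I_n.+1 * 'I_n.+1 | (p.1 < p.2)%N && G p.1 p.2].

Definition hrel n (H : edgeset n) : rel 'I_n.+1 :=
  fun u v => ((u, v) \in H) || ((v, u) \in H).

Definition conn n (H : edgeset n) : rel 'I_n.+1 := connect (hrel H).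

Definition graph_connected n (G : rel 'I_n.+1) : Prop :=
  forall u v : 'I_n.+1, connect G u v.

(* H is a bond of G: a spanning subgraph of G each of whose components is an
   induced subgraph of G (every G-edge inside a component belongs to H). *)
Definition is_bond n (G : rel 'I_n.+1) (H : edgeset n) : bool :=
  (H \subset Eset G) &&
  [forall i : 'I_n.+1, forall j : 'I_n.+1,
     [&& (i < j)%N, G i j & conn H i j] ==> ((i, j) \in H)].

(* no two distinct components B, B' with a,c in B, b,d in B', a<b<c<d *)
Definition noncrossing n (H : edgeset n) : bool :=
  [forall a : 'I_n.+1, forall b : 'I_n.+1, forall c : 'I_n.+1, forall d : 'I_n.+1,
     [&& (a < b)%N, (b < c)%N, (c < d)%N, conn H a c & conn H b d] ==> conn H a b].

Definition ncbond n (G : rel 'I_n.+1) (H : edgeset n) : bool :=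
  is_bond G H && noncrossing H.

Definition nc_cover n (G : rel 'I_n.+1) (x y : edgeset n) : bool :=
  [&& ncbond G x, ncbond G y, x \proper y &
      [forall z : edgeset n, ~~ [&& ncbond G z, x \proper z & z \proper y]]].

(* s is (the sequence of elements after x of) a maximal chain of the interval [x,y]:
   x = H0 <. H1 <. ... <. Hk = y *)
Definition maxchain n (G : rel 'I_n.+1) (x y : edgeset n) (s : seq (edgeset n)) : bool :=
  path (nc_cover G) x s && (last x s == y).

Definition isbmin n (H : edgeset n) (v : 'I_n.+1) : bool :=
  [forall u : 'I_n.+1, (u < v)%N ==> ~~ conn H u v].

(* max-min edge labeling of a cover H <. H' merging blocks B, B' :
   max{min B, min B'} - 1 (1-indexed) = max{min B, min B'} (0-indexed), which is
   the unique vertex that is a block minimum in H but not in H'.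
   (Defined as the maximum of such vertices; when exactly two blocks merge there is
   exactly one.) *)
Definition mmlabel n (H H' : edgeset n) : nat :=
  \max_(v : 'I_n.+1 | isbmin H v && ~~ isbmin H' v) (v : nat).

Definition chain_labels n (x : edgeset n) (s : seq (edgeset n)) : seq nat :=
  pairmap (@mmlabel n) x s.

Fixpoint lexlt (s t : seq nat) : bool :=
  match s, t with
  | x :: s', y :: t' => (x < y)%N || ((x == y) && lexlt s' t')
  | _, _ => false
  end.

Definition nc_graded n (G : rel 'I_n.+1) : Prop :=
  forall s t, maxchain G set0 (Eset G) s -> maxchain G set0 (Eset G) t ->
  size s = size t.

Definition mm_EL_labeling n (G : rel 'I_n.+1) : Prop :=
  forall x y : edgeset n, ncbond G x -> ncbond G y -> x \subset y ->
  exists s, [/\ maxchain G x y s,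
               sorted ltn (chain_labels x s),
               (forall t, maxchain G x y t -> sorted ltn (chain_labels x t) -> t = s) &
               (forall t, maxchain G x y t -> t <> s ->
                  lexlt (chain_labels x s) (chain_labels x t))].

Definition mm_Sn_EL_labeling n (G : rel 'I_n.+1) : Prop :=
  [/\ mm_EL_labeling G,
      (forall s, maxchain G set0 (Eset G) s -> size s = n) &
      (forall s, maxchain G set0 (Eset G) s ->
         perm_eq (chain_labels set0 s) (iota 1 n))].

Definition perfectly_labeled n (G : rel 'I_n.+1) : Prop :=
  forall i j k : 'I_n.+1, (i < j)%N -> (j < k)%N -> G i k -> G j k -> G i j.

(* A cover [x <. z] of noncrossing bonds merges two blocks, so exactly one vertex, its label,
   stops being a block minimum; hence the labels along a maximal chain from [x] to [y] are the
   vertices lost between them (block minima of [x] that are not block minima of [y]), each once.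
   For [G] perfectly labeled, let [b] be the least vertex lost from [x] to [y] and [m] the minimum
   of the [y]-block of [b].  Joining the [x]-blocks of [b] and [m] gives a noncrossing bond below
   [y] (perfect labeling provides a [y]-edge from [b] down into the block of [m]), and it is the
   only cover of [x] below [y] labelled [b]; every other cover carries a larger label.  Induction
   on the interval yields the unique increasing chain, which is lexicographically first.
   Conversely, if [ik] and [jk] are edges but [ij] is not, every maximal chain from the empty
   bond to [{ik, jk}] is labelled [k] then [j], so no increasing chain exists. *)

From mathcomp Require Import all_boot zify.
Set Implicit Arguments. Unset Strict Implicit. Unset Printing Implicit Defensive.

Section EdgeSets.
Variable n : nat.
Notation T := 'I_n.+1.
Implicit Types (H x y z : edgeset n) (u v w a c : T).

Lemma hrel_sym H : symmetric (hrel H).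
Proof. by move=> u v; rewrite /hrel orbC. Qed.

Lemma conn_sym H : symmetric (conn H).
Proof. exact/sym_connect_sym/hrel_sym. Qed.

Lemma conn_trans H : transitive (conn H).
Proof. exact: connect_trans. Qed.

Lemma hrel_subset H H' u v : H \subset H' -> hrel H u v -> hrel H' u v.
Proof. by move=> /subsetP sub /orP[] /sub e; rewrite /hrel e ?orbT. Qed.

Lemma conn_subset H H' u v : H \subset H' -> conn H u v -> conn H' u v.
Proof. by move=> sub; apply: connect_sub => a c /(hrel_subset sub)/connect1. Qed.

Lemma conn_invariant (T' : eqType) (f : T -> T') H u v :
  (forall a c, hrel H a c -> f a = f c) -> conn H u v -> f u = f v.
Proof.
move=> hf c; have cl : closed (hrel H) [pred a | f a == f u].
  by move=> a b /hf; rewrite !inE => ->.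
by have := closed_connect cl c; rewrite !inE eqxx => /esym/eqP.
Qed.

Lemma conn_nontrivial H u v : conn H u v -> u != v -> exists w, hrel H u w.
Proof.
by case/connectP => -[|w p] /=; [move=> _ -> /eqP | case/andP => e _ _ _; exists w].
Qed.

Lemma conn0 u v : conn set0 u v = (u == v).
Proof.
apply/idP/eqP => [c|->]; last exact: connect0.
by apply: contraTeq c => /(conn_nontrivial (H := set0)) ne; apply/negP => /ne[w];
  rewrite /hrel !inE.
Qed.

Lemma isbminP H v : reflect (forall u, u < v -> ~~ conn H u v) (isbmin H v).
Proof. by apply: (iffP forallP) => h u; [move=> uv; have := h u; rewrite uv | apply/implyP/h]. Qed.

Lemma isbmin_subset H H' v : H \subset H' -> isbmin H' v -> isbmin H v.
Proof.
move=> sub /isbminP h; apply/isbminP => u /h; apply: contra; exact: conn_subset.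
Qed.

Lemma isbmin0 v : isbmin set0 v.
Proof. by apply/isbminP => u; rewrite conn0; apply: contraTneq => ->; rewrite ltnn. Qed.

Lemma isbmin_eq H a c : isbmin H a -> isbmin H c -> conn H a c -> a = c.
Proof.
move=> /isbminP ha /isbminP hc ac; case: (ltngtP a c) => [lt|lt|/val_inj //].
  by have := hc a lt; rewrite ac.
by have := ha c lt; rewrite conn_sym ac.
Qed.

Definition blockmin H v : T := [arg min_(u < v | conn H u v) val u].

Lemma blockminP H v : conn H (blockmin H v) v /\ forall u, conn H u v -> blockmin H v <= u.
Proof. by rewrite /blockmin; case: arg_minnP; first exact: connect0. Qed.

Lemma conn_blockmin H v : conn H (blockmin H v) v.
Proof. by case: (blockminP H v). Qed.

Lemma blockmin_le H v : blockmin H v <= v.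
Proof. by case: (blockminP H v) => _; apply; apply: connect0. Qed.

Lemma isbmin_blockmin H v : isbmin H (blockmin H v).
Proof.
apply/isbminP => u lt; apply/negP => c; case: (blockminP H v) => c' /(_ u).
by move=> /(_ (conn_trans c c')); rewrite leqNgt lt.
Qed.

Lemma blockmin_id H u v : isbmin H u -> conn H u v -> blockmin H v = u.
Proof.
move=> hu c; apply: isbmin_eq (isbmin_blockmin _ _) hu _.
by rewrite conn_sym in c; apply: conn_trans (conn_blockmin H v) c.
Qed.

Lemma eq_blockmin H a c : (blockmin H a == blockmin H c) = conn H a c.
Proof.
apply/eqP/idP => [e|ac].
  have := conn_blockmin H a; rewrite conn_sym e => /conn_trans; apply.
  exact: conn_blockmin.
apply/esym/blockmin_id; first exact: isbmin_blockmin.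
exact: conn_trans (conn_blockmin H a) ac.
Qed.

Lemma isbminE H v : isbmin H v = (blockmin H v == v).
Proof.
apply/idP/eqP => [h|<-]; last exact: isbmin_blockmin.
exact: blockmin_id h (connect0 _ _).
Qed.

Lemma blockmin_lt H v : ~~ isbmin H v -> blockmin H v < v.
Proof. by rewrite isbminE ltn_neqAle blockmin_le andbT val_eqE. Qed.

Lemma noncrossP H : reflect (forall a b c d : T, a < b -> b < c -> c < d ->
   conn H a c -> conn H b d -> conn H a b) (noncrossing H).
Proof.
apply: (iffP forallP) => [h a b c d ab bc cd ac bd|h a].
  by move: (h a) => /forallP/(_ b)/forallP/(_ c)/forallP/(_ d)/implyP; apply; apply/and5P.
do 3!apply/forallP => ?; apply/implyP => /and5P[]; exact: h.
Qed.

Lemma noncrossing_nested H a v c : noncrossing H -> blockmin H v < a -> a < v -> v < c ->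
  conn H a c -> conn H a v.
Proof.
move=> /noncrossP nc ma av vc ac.
have := nc _ _ _ _ ma av vc (conn_blockmin H v) ac; rewrite conn_sym => /conn_trans.
by apply; apply: conn_blockmin.
Qed.

Lemma not_isbmin_edge H v : ~~ isbmin H v -> exists w, hrel H v w.
Proof.
move=> /blockmin_lt lt; apply: (conn_nontrivial (v := blockmin H v)).
  by rewrite conn_sym conn_blockmin.
by rewrite -val_eqE neq_ltn lt orbT.
Qed.

Lemma hrel_support H (S : seq T) u w : {in H, forall e, (e.1 \in S) && (e.2 \in S)} ->
  hrel H u w -> u \in S.
Proof. by move=> sup /orP[] /sup /andP[]. Qed.

Definition lost x y v : bool := isbmin x v && ~~ isbmin y v.

Lemma lost_split x y z v : x \subset y -> y \subset z -> lost x z v = lost x y v || lost y z v.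
Proof.
rewrite /lost => xy yz; case yv: (isbmin y v); last by rewrite (contraFF (isbmin_subset yz)) ?orbF.
by rewrite (isbmin_subset xy yv).
Qed.

End EdgeSets.

Definition first_lost n (x y : edgeset n) (b : 'I_n.+1) : Prop :=
  lost x y b /\ forall v, lost x y v -> b <= v.

Section Bonds.
Variables (n : nat) (G : rel 'I_n.+1).
Notation T := 'I_n.+1.
Implicit Types (H x y z : edgeset n) (u v w a c : T).

Lemma bond_edge H u v : is_bond G H -> u < v -> G u v -> conn H u v -> (u, v) \in H.
Proof. by case/andP => _ /forallP/(_ u)/forallP/(_ v)/implyP h uv g c; apply/h/and3P. Qed.

Lemma bond_subset H H' : is_bond G H -> is_bond G H' ->
  (forall u v, conn H u v -> conn H' u v) -> H \subset H'.
Proof.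
move=> bH bH' sub; apply/subsetP => -[u v] e.
have /andP[/subsetP/(_ _ e)] := bH; rewrite inE => /andP[uv g] _.
by apply: bond_edge => //; apply/sub/connect1; rewrite /hrel e.
Qed.

Lemma bond_eq H H' : is_bond G H -> is_bond G H' -> conn H =2 conn H' -> H = H'.
Proof.
move=> bH bH' e; apply/eqP; rewrite eqEsubset !bond_subset // => u v; by rewrite e.
Qed.

Lemma bond_eq_isbmin x y : is_bond G x -> is_bond G y -> x \subset y ->
  (forall v, isbmin x v -> isbmin y v) -> x = y.
Proof.
move=> bx bY xy sub; apply/eqP; rewrite eqEsubset xy bond_subset // => u v c.
have bmy w : blockmin y w = blockmin x w.
  by apply/blockmin_id/(conn_subset xy)/conn_blockmin; apply/sub/isbmin_blockmin.
by rewrite -eq_blockmin -!bmy eq_blockmin.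
Qed.

Lemma exists_first_lost x y : is_bond G x -> is_bond G y -> x \subset y -> x != y ->
  exists b, first_lost x y b.
Proof.
move=> bx bY xy; case: (pickP (lost x y)) => [v0 l0 _|none].
  by case: (arg_minnP val l0) => b lb hb; exists b.
case/eqP; apply: bond_eq_isbmin => // v xv.
by have := none v; rewrite /lost xv => /negbFE.
Qed.

Hypotheses (Gsym : symmetric G) (Girr : irreflexive G).

Lemma hrel_bond H u v : is_bond G H -> hrel H u v = G u v && conn H u v.
Proof.
move=> bH; apply/idP/andP => [e|[g c]].
  split; last exact: connect1.
  case/andP: bH => /subsetP sub _.
  by case/orP: e => /sub; rewrite inE => /andP[_] //; rewrite Gsym.
rewrite /hrel; case: (ltngtP u v) => [lt|lt|/val_inj e].
- by rewrite bond_edge.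
- by rewrite (bond_edge bH lt) ?orbT // 1?Gsym // conn_sym.
- by move: g; rewrite e Girr.
Qed.

Lemma hrel_bond_neq H u v : is_bond G H -> hrel H u v -> u != v.
Proof.
by move=> bH; rewrite hrel_bond // => /andP[g _]; apply: contraTneq g => ->; rewrite Girr.
Qed.

Hypothesis PL : perfectly_labeled G.

Lemma peak_edge y a t c : is_bond G y -> hrel y a t -> hrel y t c ->
  a < t -> c < t -> a != c -> hrel y a c.
Proof.
move=> bY at_ tc lat lct ac; rewrite hrel_bond //; apply/andP; split; last first.
  exact: conn_trans (connect1 at_) (connect1 tc).
move: at_ tc; rewrite !hrel_bond // => /andP[gat _] /andP[gtc _]; rewrite Gsym in gtc.
case: (ltngtP a c) => [lt|lt|/val_inj e]; first exact: PL lt lct gat gtc.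
  by rewrite Gsym; exact: PL lt lat gtc gat.
by rewrite e eqxx in ac.
Qed.

(* Repeatedly cut the path at its highest vertex [t]: the two neighbours of [t] on the path are
   adjacent by [peak_edge], until [t] is [v] itself. *)
Lemma bond_lower_neighbour y u v : is_bond G y -> u < v -> conn y u v ->
  exists2 w : T, w < v & hrel y w v.
Proof.
move=> bY uv /connectP[p]; have [k] := ubnP (size p); elim: k p => // k IH p sz pth vE.
have [t tp tmax] := arg_maxnP (P := fun i => i \in u :: p) val (mem_head u p).
have le_t (w : T) : w \in u :: p -> w <= t := tmax w.
have vt : v <= t by rewrite vE le_t ?mem_last.
have lt_t (w : T) : w \in u :: p -> w != t -> w < t.
  by move=> wp wt; rewrite ltn_neqAle val_eqE wt le_t.
have {}tp : t \in p by move: tp; rewrite inE => /predU1P[tu|//]; move: uv; rewrite -tu ltnNge vt.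
clear le_t tmax; case/splitPr: tp pth sz vE lt_t => p1 p2; set a := last u p1.
have ap : a \in u :: p1 ++ t :: p2 by rewrite -cat_cons mem_cat mem_last.
rewrite cat_path /= => /and3P[pth1 at_ pth2] sz vE lt_t.
have lat := lt_t a ap (hrel_bond_neq bY at_).
case: p2 => [|c p3] in pth2 sz vE lt_t ap *; first by exists a; rewrite // vE last_cat.
case/andP: pth2 => tc pth3.
have lct : c < t.
  by rewrite lt_t ?(hrel_bond_neq bY) 1?hrel_sym // -cat_cons mem_cat !inE eqxx !orbT.
have [ec|nec] := eqVneq a c.
  apply: (IH (p1 ++ p3)); first by move: sz; rewrite !size_cat /=; lia.
    by rewrite cat_path pth1 -/a ec.
  by rewrite vE !last_cat /= -/a ec.
apply: (IH (p1 ++ c :: p3)); first by move: sz; rewrite !size_cat /=; lia.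
  rewrite cat_path pth1 /=; apply/andP; split=> //; exact: peak_edge at_ tc lat lct nec.
by rewrite vE !last_cat.
Qed.

End Bonds.

Section Merge.
Variables (n : nat) (G : rel 'I_n.+1).
Notation T := 'I_n.+1.
Implicit Types (z : edgeset n) (u v w a c : T).
Hypotheses (Gsym : symmetric G) (Girr : irreflexive G) (PL : perfectly_labeled G).
Variables (x y : edgeset n) (b : T).
Hypotheses (ncx : ncbond G x) (ncy : ncbond G y) (xy : x \subset y).
Hypothesis bfirst : first_lost x y b.

Local Notation m := (blockmin y b).

(* The least vertex of the block of [u] once the [x]-blocks of [b] and [m] are joined. *)
Definition merge_min u : T := if blockmin x u == b then m else blockmin x u.
Local Notation K := merge_min.

Definition merge : edgeset n := [set e in Eset G | K e.1 == K e.2].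

Let bx : isbmin x b. Proof. by case: bfirst => /andP[]. Qed.
Let yb : ~~ isbmin y b. Proof. by case: bfirst => /andP[]. Qed.
Let bxy : is_bond G x. Proof. by case/andP: ncx. Qed.
Let bY : is_bond G y. Proof. by case/andP: ncy. Qed.
Let conn_y_bm : conn y b m. Proof. by rewrite conn_sym conn_blockmin. Qed.

Lemma blockmin_y_lt : m < b.
Proof. exact: blockmin_lt yb. Qed.

Lemma blockmin_x_b : blockmin x b = b.
Proof. by apply/eqP; rewrite -isbminE. Qed.

Lemma merge_min_conn_x u v : conn x u v -> K u = K v.
Proof. by rewrite -eq_blockmin /merge_min => /eqP ->. Qed.

Lemma merge_min_id u : K u != m -> K u = blockmin x u.
Proof. by rewrite /merge_min; case: ifP => // _; rewrite eqxx. Qed.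

Lemma merge_min_eq_m u : K u = m -> blockmin x u <= b.
Proof. by rewrite /merge_min; case: ifP => [/eqP ->|_ ->] //; apply/ltnW/blockmin_y_lt. Qed.

Lemma merge_min_le u : K u <= u.
Proof.
rewrite /merge_min; case: ifP => [/eqP e|_]; last exact: blockmin_le.
by rewrite (ltnW (leq_trans blockmin_y_lt _)) // -e blockmin_le.
Qed.

Lemma merge_min_split u v : K u = K v -> blockmin x u != blockmin x v -> K u = m.
Proof.
move=> e; apply: contraNeq => ne; move: (ne); rewrite e => ne'.
by rewrite -(merge_min_id ne) -(merge_min_id ne') e.
Qed.

Lemma merge_min_b : K b = m.
Proof. by rewrite /merge_min blockmin_x_b eqxx. Qed.

Lemma conn_of_merge_min z u v : x \subset z -> conn z b m -> K u = K v -> conn z u v.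
Proof.
move=> xz bm e; have toK w : conn z w (K w).
  have wx : conn z w (blockmin x w) by apply: (conn_subset xz); rewrite conn_sym conn_blockmin.
  by rewrite /merge_min; case: ifP => // /eqP wb; rewrite wb in wx; apply: conn_trans wx bm.
by apply: conn_trans (toK u) _; rewrite e conn_sym.
Qed.

Lemma first_lost_le_blockmin t : conn y t b -> blockmin x t != m -> b <= blockmin x t.
Proof.
move=> tb ne; case: bfirst => _; apply; rewrite /lost isbmin_blockmin /=.
apply: contra ne => yt; apply/eqP/esym/blockmin_id => //.
exact: conn_trans (conn_subset xy (conn_blockmin x t)) tb.
Qed.

Lemma merge_min_gt_first t : conn y t b -> K t != m -> K t = blockmin x t /\ b < K t.
Proof.
move=> tb ne; have e := merge_min_id ne; split=> //.
have nb : blockmin x t != b by apply: contra ne; rewrite /merge_min => ->.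
by rewrite e ltn_neqAle eq_sym val_eqE nb first_lost_le_blockmin // -e.
Qed.

Lemma mem_merge e : (e \in merge) = (e \in Eset G) && (K e.1 == K e.2).
Proof. by rewrite [LHS]inE. Qed.

Lemma merge_edge u v : hrel merge u v -> K u = K v.
Proof. by case/orP; rewrite mem_merge => /andP[_ /eqP]. Qed.

Lemma merge_bond : is_bond G merge.
Proof.
apply/andP; split; first by apply/subsetP => e; rewrite inE => /andP[].
apply/forallP => u; apply/forallP => v; apply/implyP => /and3P[uv g c].
by rewrite inE /= (conn_invariant merge_edge c) eqxx andbT inE uv g.
Qed.

Lemma subset_merge : x \subset merge.
Proof.
apply/subsetP => e ex; case/andP: bxy => /subsetP/(_ e ex) eG _.
have c : conn x e.1 e.2 by apply: connect1; rewrite /hrel -surjective_pairing ex.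
by rewrite inE eG (merge_min_conn_x c) eqxx.
Qed.

Lemma conn_merge_mb : conn merge b m.
Proof.
have [w wb wy] := bond_lower_neighbour Gsym Girr PL bY blockmin_y_lt (conn_blockmin y b).
have xw : blockmin x w = m.
  apply/eqP; apply: contraT => /(first_lost_le_blockmin (connect1 wy)).
  by rewrite leqNgt (leq_ltn_trans (blockmin_le x w) wb).
have Kw : K w = m by rewrite /merge_min xw -val_eqE /= (ltn_eqF blockmin_y_lt).
have wb_merge : hrel merge w b.
  case/andP: bY => /subsetP sub _; rewrite /hrel !mem_merge /= Kw merge_min_b eqxx !andbT.
  by case/orP: wy => /sub ->; rewrite ?orbT.
rewrite conn_sym; apply: conn_trans (connect1 wb_merge).
by apply: (conn_subset subset_merge); rewrite -xw conn_blockmin.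
Qed.

Lemma conn_merge u v : conn merge u v = (K u == K v).
Proof.
apply/idP/eqP => [|]; first exact: conn_invariant merge_edge.
exact: conn_of_merge_min subset_merge conn_merge_mb.
Qed.

Lemma merge_subset : merge \subset y.
Proof.
apply: bond_subset merge_bond bY _ => u v; rewrite conn_merge => /eqP.
exact: conn_of_merge_min xy conn_y_bm.
Qed.

Lemma merge_nested a v c : K v = m -> K a = K c -> conn y a v -> a < v -> v < c -> K a = K v.
Proof.
move=> Kv Kac ya av vc; have [Kam|Kam] := eqVneq (K a) m; first by rewrite Kam Kv.
have yab : conn y a b.
  by apply: conn_trans ya (conn_of_merge_min xy conn_y_bm _); rewrite Kv merge_min_b.
have [Ka ba] := merge_min_gt_first yab Kam.
have Kc : K c = blockmin x c by apply: merge_min_id; rewrite -Kac.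
apply: merge_min_conn_x; apply: (noncrossing_nested (proj2 (andP ncx))) av vc _.
  by rewrite (leq_ltn_trans (merge_min_eq_m Kv)) // (leq_trans ba) // Ka blockmin_le.
by rewrite -eq_blockmin -Ka -Kc Kac.
Qed.

Lemma merge_noncrossing : noncrossing merge.
Proof.
apply/noncrossP => a1 a2 a3 a4 l12 l23 l34; rewrite !conn_merge => /eqP K13 /eqP K24.
have conn_y u v : K u = K v -> conn y u v := conn_of_merge_min xy conn_y_bm.
have y12 : conn y a1 a2.
  case/andP: ncy => _ /noncrossP nc; exact: nc l12 l23 l34 (conn_y _ _ K13) (conn_y _ _ K24).
apply/eqP; have [e13|n13] := eqVneq (blockmin x a1) (blockmin x a3);
  have [e24|n24] := eqVneq (blockmin x a2) (blockmin x a4).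
- apply: merge_min_conn_x; case/andP: ncx => _ /noncrossP nc.
  by apply: nc l12 l23 l34 _ _; rewrite -eq_blockmin ?e13 ?e24.
- by apply: merge_nested (merge_min_split K24 n24) K13 y12 l12 l23.
- have K3 : K a3 = m by rewrite -K13; apply: merge_min_split K13 n13.
  rewrite K13; apply/esym/(merge_nested K3 K24 _ l23 l34).
  by rewrite conn_sym in y12; apply: conn_trans y12 (conn_y _ _ K13).
- by rewrite (merge_min_split K13 n13) (merge_min_split K24 n24).
Qed.

Lemma merge_ncbond : ncbond G merge.
Proof. by rewrite /ncbond merge_bond merge_noncrossing. Qed.

Lemma lost_merge : lost x merge =1 pred1 b.
Proof.
move=> v /=; rewrite /lost; have [->|nvb] := eqVneq v b.
  by rewrite bx /=; apply/negP => /isbminP/(_ _ blockmin_y_lt); rewrite conn_sym conn_merge_mb.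
case xv: (isbmin x v) => //=; apply/negbF/isbminP => u uv; rewrite conn_merge.
have Kv : K v = v by move: xv; rewrite /merge_min isbminE => /eqP ->; rewrite (negbTE nvb).
by rewrite Kv; apply: contraTneq uv => <-; rewrite -leqNgt merge_min_le.
Qed.

Lemma blockmin_between z u : x \subset z -> z \subset y -> lost x z =1 pred1 b ->
  blockmin z u = K u.
Proof.
move=> xz zy lz; rewrite /merge_min; case: ifP => [/eqP xub|xub]; last first.
  apply: blockmin_id; last by apply: (conn_subset xz); apply: conn_blockmin.
  by have := lz (blockmin x u); rewrite /lost /= isbmin_blockmin xub => /negbFE.
have -> : blockmin z u = blockmin z b.
  by apply/eqP; rewrite eq_blockmin; apply: (conn_subset xz); rewrite conn_sym -xub conn_blockmin.
have zt := isbmin_blockmin z b; have [yt|yt] := boolP (isbmin y (blockmin z b)).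
  by apply/esym/blockmin_id => //; apply: (conn_subset zy); apply: conn_blockmin.
have tb : blockmin z b = b.
  apply/val_inj/eqP; rewrite eqn_leq blockmin_le; case: bfirst => _; apply.
  by rewrite /lost (isbmin_subset xz zt).
by move: zt; rewrite tb; have := lz b; rewrite /lost /= eqxx => /andP[_ /negbTE ->].
Qed.

Lemma merge_unique z : is_bond G z -> x \subset z -> z \subset y -> lost x z =1 pred1 b ->
  z = merge.
Proof.
move=> bz xz zy lz; apply: bond_eq bz merge_bond _ => u v.
by rewrite conn_merge -eq_blockmin !(blockmin_between _ xz zy lz).
Qed.

Lemma merge_cover : nc_cover G x merge.
Proof.
have xM : x != merge by apply/eqP => e; have := lost_merge b; rewrite -e /lost andbN /= eqxx.
rewrite /nc_cover ncx merge_ncbond properEneq xM subset_merge /=.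
apply/forallP => w; apply/negP => /and3P[/andP[bw _] xw wM].
have [v [lv _]] := exists_first_lost bxy bw (proper_sub xw) (proper_neq xw).
have lost_w u : lost x w u -> u = b.
  move=> lu; apply/eqP; have := lost_merge u.
  by rewrite (lost_split _ (proper_sub xw) (proper_sub wM)) lu /= => <-.
have lw : lost x w =1 pred1 b.
  by move=> u /=; apply/idP/eqP => [/lost_w //|->]; rewrite -(lost_w v lv).
have := merge_unique bw (proper_sub xw) (subset_trans (proper_sub wM) merge_subset) lw.
by move=> e; rewrite e properxx in wM.
Qed.

End Merge.

Section Chains.
Variables (n : nat) (G : rel 'I_n.+1).
Notation T := 'I_n.+1.
Implicit Types (x y z : edgeset n) (s t : seq (edgeset n)).

Lemma ncbond_bond x : ncbond G x -> is_bond G x.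
Proof. by case/andP. Qed.

Lemma maxchain_nil x y : maxchain G x y [::] = (x == y).
Proof. by []. Qed.

Lemma maxchain_cons x y z s : maxchain G x y (z :: s) = nc_cover G x z && maxchain G z y s.
Proof. by rewrite /maxchain /= andbA. Qed.

Lemma maxchain_subset x y s : maxchain G x y s -> x \subset y.
Proof.
elim: s x => [|z s IH] x; first by rewrite maxchain_nil => /eqP ->.
by rewrite maxchain_cons => /andP[/and4P[_ _ /proper_sub xz _] /IH]; apply: subset_trans.
Qed.

Lemma maxchain_neq x y z s : maxchain G x y (z :: s) -> x != y.
Proof.
rewrite maxchain_cons => /andP[/and4P[_ _ xz _] /maxchain_subset zy].
exact: proper_neq (proper_sub_trans xz zy).
Qed.

Lemma mmlabel_pred1 x z (d : T) : lost x z =1 pred1 d -> mmlabel x z = d.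
Proof. by move=> h; rewrite /mmlabel (big_pred1 d h). Qed.

End Chains.

Section Labels.
Variables (n : nat) (G : rel 'I_n.+1).
Notation T := 'I_n.+1.
Implicit Types (x y z : edgeset n) (s t : seq (edgeset n)).
Hypotheses (Gsym : symmetric G) (Girr : irreflexive G) (PL : perfectly_labeled G).

Lemma cover_lost x z : nc_cover G x z -> exists2 d : T, mmlabel x z = d & lost x z =1 pred1 d.
Proof.
case/and4P=> nx nz /[dup] /proper_sub xz' xz /forallP between.
have [b bf] := exists_first_lost (ncbond_bond nx) (ncbond_bond nz) xz' (proper_neq xz).
have zM : merge G x z b = z.
  apply/eqP; move: (between (merge G x z b)); rewrite (merge_ncbond Gsym Girr PL) //.
  have /and4P[_ _ -> _] := merge_cover Gsym Girr PL nx nz xz' bf.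
  by rewrite properEneq (merge_subset Gsym Girr PL) //= andbT negbK.
have lz := lost_merge Gsym Girr PL nx nz xz' bf; rewrite zM in lz.
by exists b; first exact: mmlabel_pred1.
Qed.

Lemma maxchain_labels x y s : maxchain G x y s ->
  uniq (chain_labels x s) /\ chain_labels x s =i [seq val v | v in lost x y].
Proof.
elim: s x => [|z s IH] x.
  rewrite maxchain_nil => /eqP <-; split=> // i; rewrite in_nil; apply/esym/imageP => -[v].
  by rewrite unfold_in /lost andbN.
rewrite maxchain_cons => /andP[cxz mzy]; have [U M] := IH z mzy.
have [d md ld] := cover_lost cxz.
have xz : x \subset z by case/and4P: cxz => _ _ /proper_sub.
have lost_xy v : lost x y v = (v == d) || lost z y v.
  by rewrite (lost_split _ xz (maxchain_subset mzy)) ld.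
split.
  rewrite /= md U andbT M; apply/imageP => -[v]; rewrite unfold_in => lzy /val_inj e.
  by move: (ld d) lzy; rewrite /lost /= eqxx e => /andP[_ /negbTE ->].
move=> i; rewrite /= md inE M; apply/orP/imageP => [[/eqP ->|/imageP[v lv ->]]|[v]].
- by exists d; rewrite // -topredE /= lost_xy eqxx.
- by exists v; rewrite // -topredE /= lost_xy; rewrite -topredE /= in lv; rewrite lv orbT.
- rewrite -topredE /= lost_xy => /orP[/eqP -> ->|lv ->]; first by left.
  by right; apply/imageP; exists v; rewrite // -topredE.
Qed.

Lemma head_label_lost x y z s : maxchain G x y (z :: s) ->
  exists2 d : T, mmlabel x z = d & lost x y d.
Proof.
case/maxchain_labels => _ /(_ (mmlabel x z)); rewrite inE eqxx => /esym/imageP[d ld ->].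
by exists d; rewrite // -topredE.
Qed.

Lemma increasing_head x y z s b : maxchain G x y (z :: s) ->
  sorted ltn (chain_labels x (z :: s)) -> first_lost x y b -> mmlabel x z = b.
Proof.
move=> mc ss [lb minb]; have [d md ld] := head_label_lost mc.
have [_ M] := maxchain_labels mc.
have : val b \in chain_labels x (z :: s) by rewrite M image_f // -topredE.
rewrite inE => /predU1P[-> //|bs].
have /allP/(_ _ bs) := order_path_min ltn_trans ss.
by rewrite md ltnNge minb.
Qed.

Lemma head_eq_merge x y z s b : ncbond G x -> ncbond G y -> maxchain G x y (z :: s) ->
  first_lost x y b -> mmlabel x z = b -> z = merge G x y b.
Proof.
move=> nx ny mc bf zb; move: (mc); rewrite maxchain_cons => /andP[cxz mzy].
have /and4P[_ /andP[bz _] /proper_sub xz _] := cxz.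
apply: (merge_unique Gsym Girr PL nx ny (maxchain_subset mc) bf bz xz (maxchain_subset mzy)).
have [d md ld] := cover_lost cxz.
by have -> : b = d by apply: val_inj => /=; rewrite -md zb.
Qed.

Lemma increasing_chain_exists x y : ncbond G x -> ncbond G y -> x \subset y ->
  exists2 s, maxchain G x y s & sorted ltn (chain_labels x s).
Proof.
have [k] := ubnP (#|y| - #|x|); elim: k x => // k IH x sz nx ny xy.
have [<-|ne] := eqVneq x y; first by exists [::]; rewrite ?maxchain_nil.
have [b bf] := exists_first_lost (ncbond_bond nx) (ncbond_bond ny) xy ne.
have cxz := merge_cover Gsym Girr PL nx ny xy bf.
have zy := merge_subset Gsym Girr PL nx ny xy bf.
have lz := lost_merge Gsym Girr PL nx ny xy bf.
set z := merge G x y b in cxz zy lz.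
have /and4P[_ nz xz _] := cxz.
have [|s mzy ss] := IH z _ nz ny zy.
  by move: sz (proper_card xz) (subset_leq_card zy); lia.
exists (z :: s); first by rewrite maxchain_cons cxz.
case: s mzy ss => [//|z' s] mzy ss; rewrite /chain_labels /= in ss *.
rewrite ss andbT (mmlabel_pred1 lz); have [d -> ld] := head_label_lost mzy.
have bd : b <= d by case: bf => _; apply; rewrite (lost_split d (proper_sub xz) zy) ld orbT.
have nb : d != b.
  by apply: contraTneq ld => ->; have := lz b; rewrite /lost /= eqxx => /andP[_ /negbTE ->].
by rewrite ltn_neqAle val_eqE eq_sym nb bd.
Qed.

Lemma increasing_chain_unique x y s t : ncbond G x -> ncbond G y ->
  maxchain G x y s -> sorted ltn (chain_labels x s) ->
  maxchain G x y t -> sorted ltn (chain_labels x t) -> t = s.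
Proof.
elim: s x t => [|z s IH] x [|z' t] nx ny ms ss mt st //.
- by move: ms mt; rewrite maxchain_nil => /eqP -> /maxchain_neq; rewrite eqxx.
- by move: mt ms; rewrite maxchain_nil => /eqP -> /maxchain_neq; rewrite eqxx.
have [b bf] := exists_first_lost (ncbond_bond nx) (ncbond_bond ny) (maxchain_subset ms)
  (maxchain_neq ms).
have ez := head_eq_merge nx ny ms bf (increasing_head ms ss bf).
have ez' := head_eq_merge nx ny mt bf (increasing_head mt st bf).
have {ez ez'} e : z' = z by rewrite ez ez'.
subst z'; move: ms mt; rewrite !maxchain_cons => /andP[/and4P[_ nz _ _] ms] /andP[_ mt].
by congr (_ :: _); apply: (IH z) => //; [exact: path_sorted ss | exact: path_sorted st].
Qed.

Lemma increasing_chain_lexmin x y s t : ncbond G x -> ncbond G y ->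
  maxchain G x y s -> sorted ltn (chain_labels x s) -> maxchain G x y t -> t <> s ->
  lexlt (chain_labels x s) (chain_labels x t).
Proof.
elim: s x t => [|z s IH] x [|z' t] nx ny ms ss mt ts //.
- by move: ms mt; rewrite maxchain_nil => /eqP -> /maxchain_neq; rewrite eqxx.
- by move: mt ms; rewrite maxchain_nil => /eqP -> /maxchain_neq; rewrite eqxx.
have [b bf] := exists_first_lost (ncbond_bond nx) (ncbond_bond ny) (maxchain_subset ms)
  (maxchain_neq ms).
have zb := increasing_head ms ss bf; have [d md ld] := head_label_lost mt.
rewrite /= zb md; have [//|db] := ltnP b d.
have {db} e : val d = val b by apply/eqP; rewrite eqn_leq db; case: bf => _; apply.
have ez := head_eq_merge nx ny ms bf zb.
have ez' := head_eq_merge nx ny mt bf (etrans md e).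
have {ez ez'} e' : z' = z by rewrite ez ez'.
subst z'; rewrite e eqxx /=; move: ms mt; rewrite !maxchain_cons.
move=> /andP[/and4P[_ nz _ _] ms] /andP[_ mt].
by apply: (IH z) => //; [exact: path_sorted ss | move=> ts'; apply: ts; rewrite ts'].
Qed.

Lemma perfectly_labeled_EL : mm_EL_labeling G.
Proof.
move=> x y nx ny xy; have [s ms ss] := increasing_chain_exists nx ny xy.
exists s; split=> // t mt st; first exact: increasing_chain_unique nx ny ms ss mt st.
exact: increasing_chain_lexmin nx ny ms ss mt st.
Qed.

Lemma hrel_Eset : hrel (Eset G) =2 G.
Proof.
move=> u v; rewrite /hrel !inE /=; case: (ltngtP u v) => [_|_|/val_inj ->].
- by rewrite orbF.
- by rewrite Gsym.
- by rewrite Girr.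
Qed.

Lemma lost_bottom_top v : graph_connected G -> lost set0 (Eset G) v = (val v != 0).
Proof.
move=> Gconn; rewrite /lost isbmin0 /=; congr negb; apply/isbminP/eqP => [top|->] //.
apply/eqP; rewrite -leqn0 leqNgt; apply/negP => v0.
by have := top ord0 v0; rewrite /conn (eq_connect hrel_Eset) Gconn.
Qed.

Lemma maxchain_top_labels s : graph_connected G -> maxchain G set0 (Eset G) s ->
  perm_eq (chain_labels set0 s) (iota 1 n).
Proof.
move=> Gconn /maxchain_labels[U M]; apply: uniq_perm U (iota_uniq _ _) _ => i.
rewrite M mem_iota add1n; apply/imageP/idP => [[v] | /andP[i0 lt_in]].
  by rewrite -topredE /= lost_bottom_top // -lt0n => v0 ->; rewrite v0 ltn_ord.
by exists (Ordinal lt_in); rewrite // -topredE /= lost_bottom_top // -lt0n.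
Qed.

End Labels.

Section SmallBonds.
Variables (n : nat) (G : rel 'I_n.+1).
Notation T := 'I_n.+1.
Implicit Types (H : edgeset n).

Lemma support_ncbond H (S : seq T) : H \subset Eset G ->
  {in H, forall e, (e.1 \in S) && (e.2 \in S)} -> size S <= 3 ->
  (forall a c, a \in S -> c \in S -> a < c -> G a c -> (a, c) \in H) -> ncbond G H.
Proof.
move=> HG sup S3 full.
have inS u v : conn H u v -> u != v -> u \in S.
  by move=> c /(conn_nontrivial c)[w /(hrel_support sup)].
have neq u v : u < v -> u != v by apply: contraTneq => ->; rewrite ltnn.
apply/andP; split.
  apply/andP; split=> //; apply/forallP => a; apply/forallP => c.
  apply/implyP => /and3P[ac g conn_ac]; apply: (full _ _ _ _ ac g).
  exact: inS conn_ac (neq _ _ ac).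
  by apply: (inS _ a); rewrite 1?conn_sym // eq_sym neq.
apply/noncrossP => a b c d ab bc cd ac bd; exfalso.
have ltS : sorted (fun u v : T => u < v) [:: a; b; c; d] by rewrite /= ab bc cd.
have U := sorted_uniq (fun u v w : T => @ltn_trans u v w) (fun u : T => ltnn u) ltS.
have lac := ltn_trans ab bc; have lbd := ltn_trans bc cd.
have sub : {subset [:: a; b; c; d] <= S}.
  move=> u; rewrite !inE => /or4P[] /eqP ->.
  - exact: inS ac (neq _ _ lac).
  - exact: inS bd (neq _ _ lbd).
  - by apply: (inS _ a); rewrite 1?conn_sym // eq_sym neq.
  - by apply: (inS _ b); rewrite 1?conn_sym // eq_sym neq.
by have := uniq_leq_size U sub; rewrite leqNgt (leq_ltn_trans S3).
Qed.

Lemma ncbond_set0 : ncbond G set0.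
Proof. by apply: (support_ncbond (S := [::])); rewrite ?sub0set // => e; rewrite inE. Qed.

End SmallBonds.

Section TwoEdgeObstruction.
Variables (n : nat) (G : rel 'I_n.+1) (i j k : 'I_n.+1).
Hypotheses (ij : i < j) (jk : j < k) (gik : G i k) (gjk : G j k).
Implicit Types z : edgeset n.
Local Notation star := [set (i, k); (j, k)].

Let ik : i < k. Proof. exact: ltn_trans ij jk. Qed.

Let starE e : (e \in star) = (e == (i, k)) || (e == (j, k)). Proof. by rewrite !inE. Qed.

Let star_support : {in star, forall e, (e.1 \in [:: i; j; k]) && (e.2 \in [:: i; j; k])}.
Proof. by move=> e; rewrite starE => /orP[]/eqP-> /=; rewrite !inE !eqxx ?orbT. Qed.

Lemma ncbond_edge_ik : ncbond G [set (i, k)].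
Proof.
apply: (support_ncbond (S := [:: i; k])).
- by apply/subsetP => e; rewrite !inE => /eqP -> /=; rewrite ik gik.
- by move=> e; rewrite inE => /eqP -> /=; rewrite !inE !eqxx ?orbT.
- by [].
- move=> a c; rewrite !inE => /orP[]/eqP-> /orP[]/eqP-> lt g; rewrite ?eqxx //; exfalso; lia.
Qed.

Lemma ncbond_star : ~~ G i j -> ncbond G star.
Proof.
move=> nij; apply: (support_ncbond (S := [:: i; j; k])) star_support _ _ => //.
  by apply/subsetP => e; rewrite starE => /orP[]/eqP->; rewrite inE /= ?ik ?jk ?gik ?gjk.
move=> a c; rewrite !inE => /or3P[]/eqP-> /or3P[]/eqP-> lt g; rewrite ?eqxx ?orbT //.
all: exfalso; lia.
Qed.

Lemma star_not_cover : ~~ nc_cover G set0 star.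
Proof.
apply/negP => /and4P[_ _ _ /forallP/(_ [set (i, k)])]; rewrite ncbond_edge_ik proper0 /=.
apply/negP/negPn/andP; split; first by apply/set0Pn; exists (i, k); rewrite inE.
rewrite properE; apply/andP; split; first by apply/subsetP => e; rewrite inE starE => ->.
apply/subsetPn; exists (j, k); first by rewrite starE eqxx orbT.
by rewrite inE xpair_eqE eqxx andbT; apply: contraTneq ij => ->; rewrite ltnn.
Qed.

Lemma star_not_isbmin_k z : set0 \proper z -> z \subset star -> ~~ isbmin z k.
Proof.
rewrite proper0 => /set0Pn[e ez] /subsetP/(_ e ez); rewrite starE.
case/orP=> /eqP ee; rewrite ee in ez; apply/isbminP.
- by move=> /(_ i ik)/negP; apply; apply: connect1; rewrite /hrel ez.
- by move=> /(_ j jk)/negP; apply; apply: connect1; rewrite /hrel ez.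
Qed.

Lemma star_mmlabel_le z z' : z' \subset star -> ~~ isbmin z k -> mmlabel z z' <= j.
Proof.
move=> z'star zk; apply/bigmax_leqP => v /andP[zv /not_isbmin_edge[w vw]].
have /(hrel_support star_support) : hrel star v w by apply: hrel_subset vw.
by rewrite !inE => /or3P[]/eqP ev; subst v; [exact: ltnW | | rewrite zv in zk].
Qed.

Lemma star_chain_decreasing s : maxchain G set0 star s -> ~~ sorted ltn (chain_labels set0 s).
Proof.
case: s => [|z1 [|z2 s]].
- by rewrite maxchain_nil => /eqP/setP/(_ (i, k)); rewrite in_set0 starE eqxx.
- by rewrite maxchain_cons maxchain_nil => /andP[c /eqP e]; rewrite e in c; case/negP: star_not_cover.
rewrite !maxchain_cons /= => /and3P[/and4P[_ _ z1_ne _] /and4P[_ _ /proper_sub z12 _] m2].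
have z1k := star_not_isbmin_k z1_ne (subset_trans z12 (maxchain_subset m2)).
have k_le : k <= mmlabel set0 z1 by apply: leq_bigmax_cond; rewrite /lost isbmin0.
rewrite negb_and -leqNgt; apply/orP; left.
exact: leq_trans (star_mmlabel_le (maxchain_subset m2) z1k) (leq_trans (ltnW jk) k_le).
Qed.

End TwoEdgeObstruction.

Lemma EL_perfectly_labeled n (G : rel 'I_n.+1) : mm_EL_labeling G -> perfectly_labeled G.
Proof.
move=> EL i j k ij jk gik gjk; apply/negPn/negP => nij.
have [s [ms ss _ _]] := EL set0 _ (ncbond_set0 G) (ncbond_star ij jk gik gjk nij) (sub0set _).
by have := star_chain_decreasing ij jk gik gjk ms; rewrite ss.
Qed.

Theorem proposition5p10 (n : nat) (G : rel 'I_n.+1) :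
  symmetric G -> irreflexive G -> graph_connected G -> nc_graded G ->
  (mm_Sn_EL_labeling G <-> perfectly_labeled G).
Proof.
move=> Gsym Girr Gconn _; split=> [[EL _ _]|PL]; first exact: EL_perfectly_labeled.
have top_labels := maxchain_top_labels Gsym Girr PL Gconn.
split=> [||s ms]; [exact: perfectly_labeled_EL | | exact: top_labels].
move=> s ms; rewrite -(size_pairmap (@mmlabel n) set0 s).
by rewrite (perm_size (top_labels s ms)) size_iota.
Qed.
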